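(* Let $n \ge 1$. Let $H_n$ be the hypergraph whose vertex set consists of the $8n$ variable indices $(k,i)$ with $k \in \{1,\dots,n\}$ and $i \in \{1,2,3,4,5,6,A,B\}$, and whose hyperedges (scopes) are: (i) the singletons $\{(k,i)\}$ for all vertices; (ii) for each $k \in \{1,\dots,n\}$, the pairs $\{(k,1),(k,2)\}$, $\{(k,2),(k,3)\}$, $\{(k,3),(k,6)\}$, $\{(k,1),(k,4)\}$, $\{(k,4),(k,5)\}$, $\{(k,5),(k,6)\}$, $\{(k,A),(k,B)\}$, $\{(k,1),(k,B)\}$, $\{(k,2),(k,B)\}$, $\{(k,4),(k,A)\}$, $\{(k,4),(k,B)\}$, and the triples $\{(k,2),(k,A),(k,B)\}$, $\{(k,4),(k,A),(k,B)\}$; (iii) the pairs $\{(k,6),(k-1,1)\}$ for $2 \le k \le n$ and $\{(k,B),(k+1,A)\}$ for $1 \le k \le n-1$; (iv) the pair $\{(1,6),(1,A)\}$. Then the pathwidth of $H_n$ is exactly $3$.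
   Context: A path decomposition of a hypergraph $(V,\mathcal{S})$ is a sequence of subsets (bins) $X_1,\dots,X_p \subseteq V$ such that: every vertex lies in some bin; for every hyperedge $S \in \mathcal{S}$ there is $r$ with $S \subseteq X_r$; and if $v \in X_r \cap X_s$ then $v \in X_\ell$ for all $r \le \ell \le s$. Its width is $\max_r |X_r| - 1$, and the pathwidth of $(V,\mathcal{S})$ is the minimum width over all path decompositions. This hypergraph is the constraint hypergraph of the paper's ''controlled doubling construction'' with $n$ gadgets. *)

From mathcomp Require Import all_boot.
Set Implicit Arguments. Unset Strict Implicit. Unset Printing Implicit Defensive.

Section PathDecomposition.
Variable T : finType.

Definition bin (X : seq {set T}) (r : nat) : {set T} := nth set0 X r.

Definition is_path_decomposition (E : pred {set T}) (X : seq {set T}) : Prop :=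
  [/\
      forall v : T, exists r, r < size X /\ v \in bin X r,
      forall S : {set T}, E S -> exists r, r < size X /\ S \subset bin X r
    &
      forall (v : T) (r s l : nat), r <= l -> l <= s -> s < size X ->
        v \in bin X r -> v \in bin X s -> v \in bin X l].

Definition pd_width (X : seq {set T}) : nat := (\max_(B <- X) #|B|).-1.

Definition is_pathwidth (E : pred {set T}) (p : nat) : Prop :=
  (exists X, is_path_decomposition E X /\ pd_width X = p) /\
  (forall X, is_path_decomposition E X -> p <= pd_width X).
End PathDecomposition.

(** * The hypergraph H_n.  Vertex (k,i) with k in {1..n}, i in {1..6,A,B}
    is encoded as (k-1, j) : 'I_n * 'I_8 where labels 1..6 map to j = 0..5,
    A to j = 6 and B to j = 7. *)
Definition Hvert (n : nat) := ('I_n * 'I_8)%type.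

Definition l1 : 'I_8 := inord 0.
Definition l2 : 'I_8 := inord 1.
Definition l3 : 'I_8 := inord 2.
Definition l4 : 'I_8 := inord 3.
Definition l5 : 'I_8 := inord 4.
Definition l6 : 'I_8 := inord 5.
Definition lA : 'I_8 := inord 6.
Definition lB : 'I_8 := inord 7.

Definition gadget_edge (n : nat) (k : 'I_n) (S : {set Hvert n}) : bool :=
  [|| S == [set (k, l1); (k, l2)], S == [set (k, l2); (k, l3)],
      S == [set (k, l3); (k, l6)], S == [set (k, l1); (k, l4)],
      S == [set (k, l4); (k, l5)], S == [set (k, l5); (k, l6)],
      S == [set (k, lA); (k, lB)], S == [set (k, l1); (k, lB)],
      S == [set (k, l2); (k, lB)], S == [set (k, l4); (k, lA)],
      S == [set (k, l4); (k, lB)], S == [set (k, l2); (k, lA); (k, lB)]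
    | S == [set (k, l4); (k, lA); (k, lB)]].

Definition H_edge (n : nat) : pred {set Hvert n} := fun S =>
  [||
      [exists v : Hvert n, S == [set v]],
      [exists k : 'I_n, gadget_edge k S],
      (* (iii) {(k,6),(k-1,1)}, 2<=k<=n: k1 encodes k, k2 encodes k-1 *)
      [exists k1 : 'I_n, exists k2 : 'I_n,
         (val k1 == (val k2).+1) && (S == [set (k1, l6); (k2, l1)])],
      [exists k1 : 'I_n, exists k2 : 'I_n,
         (val k1 == (val k2).+1) && (S == [set (k2, lB); (k1, lA)])]
    |
      [exists k : 'I_n, (val k == 0) && (S == [set (k, l6); (k, lA)])]].

From mathcomp Require Import all_boot zify.
Set Implicit Arguments. Unset Strict Implicit. Unset Printing Implicit Defensive.

(* In a path decomposition every vertex occupies an interval of bins, and two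
   vertices share a bin iff their intervals meet.  Interval graphs have no
   induced 4-cycle, so in a gadget the cycle 1-2-A-4 of hyperedges forces
   2,4 or 1,A to share a bin.  With the triangles {2,A,B}, {4,A,B} and the
   edges {1,2}, {1,4}, {1,B} this yields four pairwise meeting intervals
   ({2,4,A,B} or {1,2,A,B}), which by the Helly property of intervals have a
   common bin: the width is at least 3.  Conversely, gadget k fills the bins
   6k, ..., 6k+5 with {1',B',6,A}, {6,A,3,5}, {A,3,5,4}, {A,3,4,2},
   {A,4,2,B}, {4,2,B,1}, where 1' and B' belong to gadget k-1. *)

Section Intervals.
Variables (T : eqType) (lo hi : T -> nat).

Definition meets (u v : T) : bool := (lo u <= hi v) && (lo v <= hi u).

Lemma meetsC u v : meets u v = meets v u.
Proof. by rewrite /meets andbC. Qed.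

Lemma meets_cycle4 a b c d :
  meets a b -> meets b c -> meets a d -> meets d c -> meets a c || meets b d.
Proof. rewrite /meets; lia. Qed.

Lemma intervals_common_point (s : seq T) :
  {in s &, forall u v, lo u <= hi v} ->
  {in s, forall v, lo v <= \max_(u <- s) lo u <= hi v}.
Proof.
move=> meet v vs; rewrite (leq_bigmax_seq v) //=.
by apply/bigmax_leqP_seq => u us _; exact: meet.
Qed.

End Intervals.

Lemma card_bin_le_width (T : finType) (X : seq {set T}) r :
  #|bin X r| <= (pd_width X).+1.
Proof.
case: (ltnP r (size X)) => [rX|Xr]; last by rewrite /bin nth_default ?cards0.
exact: leq_trans (leq_bigmax_seq _ (mem_nth set0 rX) isT) (leqSpred _).
Qed.

Section PathDecompositionIntervals.
Variables (T : finType) (E : pred {set T}) (X : seq {set T}).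
Hypothesis pdX : is_path_decomposition E X.

Definition first_bin (v : T) : nat := find (fun B : {set T} => v \in B) X.
Definition last_bin (v : T) : nat := \max_(r < size X | v \in bin X r) r.

Lemma mem_bin_lt_size v r : v \in bin X r -> r < size X.
Proof. by rewrite /bin; case: ltnP => // Xr; rewrite nth_default ?inE. Qed.

Lemma first_bin_le v r : v \in bin X r -> first_bin v <= r.
Proof.
move=> vr; rewrite leqNgt; apply/negP => /(before_find set0).
by rewrite -/(bin X r) vr.
Qed.

Lemma last_bin_ge v r : v \in bin X r -> r <= last_bin v.
Proof. by move=> vr; exact: (leq_bigmax_cond (Ordinal (mem_bin_lt_size vr))). Qed.

Lemma mem_first_bin v : v \in bin X (first_bin v).
Proof.
have [cover _ _] := pdX; have [r [rX vr]] := cover v.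
apply: (nth_find set0 (a := fun B : {set T} => v \in B)).
by apply/hasP; exists (bin X r); first exact: mem_nth.
Qed.

Lemma mem_last_bin v : v \in bin X (last_bin v).
Proof.
have [cover _ _] := pdX; have [r [rX vr]] := cover v.
rewrite /last_bin (bigmax_eq_arg (Ordinal rX)) //.
by case: arg_maxnP.
Qed.

Lemma mem_binE v r : (v \in bin X r) = (first_bin v <= r <= last_bin v).
Proof.
apply/idP/andP => [vr|[fr rl]]; first by rewrite first_bin_le ?last_bin_ge.
have [_ _ interpolate] := pdX.
apply: (interpolate v (first_bin v) (last_bin v)) => //.
- exact: mem_bin_lt_size (mem_last_bin v).
- exact: mem_first_bin.
- exact: mem_last_bin.
Qed.

Lemma meets_bins_refl v : meets first_bin last_bin v v.
Proof. by rewrite /meets andbb last_bin_ge ?mem_first_bin. Qed.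

Lemma edge_meets S : E S -> {in S &, forall u v, meets first_bin last_bin u v}.
Proof.
have [_ cover_edges _] := pdX; case/cover_edges => r [_ /subsetP Sr] u v uS vS.
by have := Sr u uS; have := Sr v vS; rewrite /meets !mem_binE; lia.
Qed.

Lemma clique_size_le_width (s : seq T) :
  uniq s -> {in s &, forall u v, meets first_bin last_bin u v} ->
  size s <= (pd_width X).+1.
Proof.
move=> us clique.
have meet : {in s &, forall u v, first_bin u <= last_bin v}.
  by move=> u v uS vS; case/andP: (clique u v uS vS).
have sub : [set x in s] \subset bin X (\max_(u <- s) first_bin u).
  by apply/subsetP => v; rewrite inE mem_binE; exact: intervals_common_point.
rewrite -(card_uniqP us) -cardsE.
exact: leq_trans (subset_leq_card sub) (card_bin_le_width _ _).
Qed.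

Lemma clique4_width_ge3 a b c d :
  uniq [:: a; b; c; d] ->
  meets first_bin last_bin a b -> meets first_bin last_bin a c ->
  meets first_bin last_bin a d -> meets first_bin last_bin b c ->
  meets first_bin last_bin b d -> meets first_bin last_bin c d ->
  3 <= pd_width X.
Proof.
move=> uabcd ab ac ad bc bd cd; apply: (clique_size_le_width uabcd).
move=> u v; rewrite !inE; do ![case/orP | move/eqP->].
all: by rewrite ?meets_bins_refl // meetsC.
Qed.

End PathDecompositionIntervals.

Section IntervalBins.
Variables (T : finType) (lo hi : T -> nat) (N : nat).

Definition interval_bin (r : nat) : {set T} := [set v | lo v <= r <= hi v].
Definition interval_bins : seq {set T} := mkseq interval_bin N.

Lemma bin_interval_bins r : r < N -> bin interval_bins r = interval_bin r.
Proof. by move=> rN; rewrite /bin nth_mkseq. Qed.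

Lemma interval_bins_decomposition (E : pred {set T}) :
  0 < N -> (forall v, lo v <= hi v) -> (forall v, lo v < N) ->
  (forall S, E S -> {in S &, forall u v, lo u <= hi v}) ->
  is_path_decomposition E interval_bins.
Proof.
move=> N0 lo_hi loN meet; rewrite /is_path_decomposition size_mkseq; split.
- move=> v; exists (lo v); split=> //.
  by rewrite bin_interval_bins // inE leqnn lo_hi.
- move=> S /meet meetS; exists (\max_(u <- enum S) lo u).
  have rN : \max_(u <- enum S) lo u < N.
    have : \max_(u <- enum S) lo u <= N.-1.
      by apply/bigmax_leqP_seq => u _ _; have := loN u; lia.
    lia.
  split=> //; rewrite bin_interval_bins //; apply/subsetP => v vS.
  rewrite inE; apply: intervals_common_point; rewrite ?mem_enum //.
  by move=> u w; rewrite !mem_enum; exact: meetS.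
- move=> v r s l rl ls sN; rewrite !bin_interval_bins ?inE; lia.
Qed.

Lemma interval_bins_width w :
  (forall r, #|interval_bin r| <= w.+1) -> pd_width interval_bins <= w.
Proof.
move=> card_bin; rewrite /pd_width.
have : \max_(B <- interval_bins) #|B| <= w.+1.
  by apply/bigmax_leqP_seq => _ /mapP[r _ ->] _.
lia.
Qed.

End IntervalBins.

Definition first_offset : seq nat := [:: 5; 3; 1; 2; 1; 0; 0; 4].
Definition last_offset : seq nat := [:: 6; 5; 3; 5; 2; 1; 4; 6].

Lemma offset_bounds (l : 'I_8) :
  [/\ nth 0 first_offset l <= nth 0 last_offset l, nth 0 first_offset l <= 5,
      nth 0 last_offset l <= 6 & nth 0 last_offset l < nth 0 first_offset l + 6].
Proof. by case: l => -[|[|[|[|[|[|[|[|]]]]]]]]. Qed.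

(* Bin [6q + j] meets gadget [q] at offset [j] and gadget [q - 1] at offset
   [j + 6]. *)
Definition alive_label (j : nat) (l : 'I_8) : bool :=
  (nth 0 first_offset l <= j <= nth 0 last_offset l) ||
  (nth 0 first_offset l <= j + 6 <= nth 0 last_offset l).

Lemma card_alive_label j : j < 6 -> #|[set l | alive_label j l]| <= 4.
Proof.
rewrite -sum1dep_card big_mkcond /= !big_ord_recr big_ord0 /=.
by case: j => [|[|[|[|[|[|]]]]]].
Qed.

Section HBins.
Variable n : nat.

Definition H_lo (v : Hvert n) : nat := 6 * v.1 + nth 0 first_offset v.2.
Definition H_hi (v : Hvert n) : nat := 6 * v.1 + nth 0 last_offset v.2.
Definition H_bins : seq {set Hvert n} := interval_bins H_lo H_hi (6 * n).

Lemma H_lo_le_hi v : H_lo v <= H_hi v.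
Proof. by case: v => k l; have [] := offset_bounds l; rewrite /H_lo /H_hi /=; lia. Qed.

Lemma H_lo_lt v : H_lo v < 6 * n.
Proof.
case: v => k l; have [] := offset_bounds l; have := ltn_ord k.
by rewrite /H_lo /=; lia.
Qed.

Ltac meets_by_offsets :=
  move=> ? ?; rewrite !inE; do ![case/orP | move/eqP->];
  rewrite /H_lo /H_hi /l1 /l2 /l3 /l4 /l5 /l6 /lA /lB /= ?inordK //=; lia.

Lemma H_edge_meets S : H_edge S -> {in S &, forall u v, H_lo u <= H_hi v}.
Proof.
case/orP=> [/existsP[w /eqP->]|].
  by move=> u v /set1P-> /set1P->; exact: H_lo_le_hi w.
case/orP=> [/existsP[k]|].
  rewrite /gadget_edge; do 12 (case/orP=> [/eqP->|]; first by meets_by_offsets).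
  by move/eqP->; meets_by_offsets.
case/orP=> [/existsP[k1 /existsP[k2 /andP[/eqP/= k12 /eqP->]]]|].
  by meets_by_offsets.
case/orP=> [/existsP[k1 /existsP[k2 /andP[/eqP/= k12 /eqP->]]]|].
  by meets_by_offsets.
by case/existsP=> k /andP[/eqP/= k0 /eqP->]; meets_by_offsets.
Qed.

Lemma H_bins_decomposition : 0 < n -> is_path_decomposition (@H_edge n) H_bins.
Proof.
move=> n0; apply: interval_bins_decomposition; [lia|exact: H_lo_le_hi|exact: H_lo_lt|].
exact: H_edge_meets.
Qed.

(* Within one bin a vertex is determined by its label, since no label's
   interval spans six bins. *)
Lemma card_H_bin r : #|interval_bin H_lo H_hi r| <= 4.
Proof.
have inj : {in interval_bin H_lo H_hi r &, injective snd}.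
  move=> [k l] [k' l']; rewrite !inE /H_lo /H_hi /= => hu hv ll'; subst l'.
  by congr pair; apply: val_inj => /=; have [] := offset_bounds l; lia.
rewrite -(card_in_imset inj).
apply: leq_trans _ (card_alive_label (ltn_pmod r (isT : 0 < 6))).
apply/subset_leq_card/subsetP => _ /imsetP[[k l] + ->].
by rewrite !inE /alive_label /H_lo /H_hi /=; have [] := offset_bounds l; lia.
Qed.

Lemma H_bins_width : pd_width H_bins <= 3.
Proof. exact: interval_bins_width card_H_bin. Qed.

End HBins.

Lemma gadget_edge_H_edge n (k : 'I_n) S : gadget_edge k S -> H_edge S.
Proof. by move=> kS; apply/orP; right; apply/orP; left; apply/existsP; exists k. Qed.

Lemma gadget_width_ge3 n (k : 'I_n) (X : seq {set Hvert n}) :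
  is_path_decomposition (@H_edge n) X -> 3 <= pd_width X.
Proof.
move=> pdX; pose sh := meets (first_bin X) (last_bin X).
have meet u v S : gadget_edge k S -> u \in S -> v \in S -> sh u v.
  by move=> /gadget_edge_H_edge/(edge_meets pdX); apply.
have m12 : sh (k, l1) (k, l2).
  by apply: (meet _ _ [set (k, l1); (k, l2)]); rewrite /gadget_edge ?inE !eqxx ?orbT.
have m14 : sh (k, l1) (k, l4).
  by apply: (meet _ _ [set (k, l1); (k, l4)]); rewrite /gadget_edge ?inE !eqxx ?orbT.
have m1B : sh (k, l1) (k, lB).
  by apply: (meet _ _ [set (k, l1); (k, lB)]); rewrite /gadget_edge ?inE !eqxx ?orbT.
have [m2A m2B mAB] : [/\ sh (k, l2) (k, lA), sh (k, l2) (k, lB) & sh (k, lA) (k, lB)].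
  by split; apply: (meet _ _ [set (k, l2); (k, lA); (k, lB)]);
    rewrite /gadget_edge ?inE !eqxx ?orbT.
have [m4A m4B] : sh (k, l4) (k, lA) /\ sh (k, l4) (k, lB).
  by split; apply: (meet _ _ [set (k, l4); (k, lA); (k, lB)]);
    rewrite /gadget_edge ?inE !eqxx ?orbT.
have uniq_gadget (L : seq 'I_8) : uniq L -> uniq [seq (k, l) | l <- L].
  by rewrite map_inj_uniq // => l l' [].
have [m1A | m24] := orP (meets_cycle4 m12 m2A m14 m4A).
- apply: (clique4_width_ge3 pdX (uniq_gadget [:: l1; l2; lA; lB] _)) => //.
  by rewrite /= !inE -!val_eqE /l1 /l2 /lA /lB /= !inordK.
- apply: (clique4_width_ge3 pdX (uniq_gadget [:: l2; l4; lA; lB] _)) => //.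
  by rewrite /= !inE -!val_eqE /l2 /l4 /lA /lB /= !inordK.
Qed.

Theorem proposition3p1 (n : nat) : 0 < n -> is_pathwidth (@H_edge n) 3.
Proof.
move=> n0; have pdH := H_bins_decomposition n0.
have width_ge3 := gadget_width_ge3 (Ordinal n0).
split=> //; exists (H_bins n); split=> //.
by apply/eqP; rewrite eqn_leq H_bins_width width_ge3.
Qed.
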